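(* Let $I$ DMUs have nonnegative, nonzero nominal output data $Y\in\mathbb{R}^{M\times I}$ and input data $X\in\mathbb{R}^{N\times I}$ and suppose the maximum allowed amount of box uncertainty is $\nu=\infty$. Then no DMU is incapable; that is, for every DMU $\hat\imath$ there exist $\sigma\ge0$ and perturbations $\Delta,\nabla$ with all entries in $[-\sigma,\sigma]$ and $Y+\Delta\ge0$, $X+\nabla\ge0$ such that the efficiency score of DMU $\hat\imath$ computed from the data $(Y+\Delta,X+\nabla)$ equals $1$.
   Context: Input-oriented BCC DEA: the efficiency score of DMU $k$ with data $(X,Y)$ is $\min\{\theta: Y\lambda\ge y^k,\ X\lambda\le\theta x^k,\ e^T\lambda=1,\ \lambda\ge0\}$, $e$ the all-ones vector. A DMU is capable under box uncertainty with bound $\nu$ if, for some amount $\sigma\in[0,\nu]$, some realisation of the data within the box of size $\sigma$ (every entry within $\sigma$ of its nominal value, data kept nonnegative) makes its efficiency score equal to $1$; it is incapable otherwise. *)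

From HB Require Import structures.
From mathcomp Require Import all_boot all_order all_algebra.
Set Implicit Arguments. Unset Strict Implicit. Unset Printing Implicit Defensive.
Import Order.TTheory GRing.Theory Num.Theory.
Local Open Scope ring_scope.

Definition bcc_feasible (R : realFieldType) (M N I : nat)
    (Y : 'M[R]_(M, I)) (X : 'M[R]_(N, I)) (k : 'I_I) (theta : R) : Prop :=
  exists lam : 'cV[R]_I,
    (forall i, 0 <= lam i 0) /\
    (\sum_(i < I) lam i 0 = 1) /\
    (forall m, Y m k <= (Y *m lam) m 0) /\
    (forall n, (X *m lam) n 0 <= theta * X n k).

(* "the efficiency score (a minimum) equals s": s is feasible and is a
   lower bound of all feasible theta. *)
Definition bcc_score_is (R : realFieldType) (M N I : nat)
    (Y : 'M[R]_(M, I)) (X : 'M[R]_(N, I)) (k : 'I_I) (s : R) : Prop :=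
  bcc_feasible Y X k s /\ (forall t, bcc_feasible Y X k t -> s <= t).

From HB Require Import structures.
From mathcomp Require Import all_boot all_order all_algebra.
Import Order.TTheory GRing.Theory Num.Theory.
Local Open Scope ring_scope.

(* Every DMU is feasible for theta = 1 with itself as reference set (lambda
   its unit vector).  Conversely, if some input is the same positive constant
   for all DMUs, that row of X lambda equals the constant for every convex
   combination lambda, which forces theta >= 1, so every DMU scores 1.  With
   unbounded uncertainty we can perturb every input to 1, at a cost of at most
   1 + sum |X n i|. *)

Section BCCScore.

Context {R : realFieldType} {M N I : nat}.
Context {Y : 'M[R]_(M, I)} {X : 'M[R]_(N, I)}.

Lemma bcc_feasible1 (k : 'I_I) : bcc_feasible Y X k 1.
Proof.
exists (delta_mx k 0); split; [|split; [|split]].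
- by move=> i; rewrite mxE ler0n.
- rewrite (bigD1 k) //= big1 ?addr0 => [|i /negPf nik]; rewrite mxE ?nik //.
  by rewrite !eqxx.
- by move=> m; rewrite -colE mxE.
- by move=> n; rewrite -colE mxE mul1r.
Qed.

Lemma bcc_feasible_ge1_const_row (n : 'I_N) (c : R) :
    0 < c -> (forall i, X n i = c) ->
  forall (k : 'I_I) (t : R), bcc_feasible Y X k t -> 1 <= t.
Proof.
move=> c_gt0 Xn_c k t [lam [_ [sum_lam [_ X_lam]]]].
have X_lam_n : (X *m lam) n 0 = c.
  rewrite mxE -[RHS]mulr1 -sum_lam mulr_sumr.
  by apply: eq_bigr => i _; rewrite Xn_c.
by rewrite -(ler_pM2r c_gt0) mul1r -{1}X_lam_n -(Xn_c k).
Qed.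

Lemma bcc_score1_const_row (n : 'I_N) (c : R) :
    0 < c -> (forall i, X n i = c) -> forall k : 'I_I, bcc_score_is Y X k 1.
Proof.
move=> c_gt0 Xn_c k; split; first exact: bcc_feasible1.
exact: bcc_feasible_ge1_const_row c_gt0 Xn_c k.
Qed.

End BCCScore.

Lemma normr_le_sum_mx (R : numDomainType) (m n : nat) (A : 'M[R]_(m, n)) i j :
  `|A i j| <= \sum_(i' < m) \sum_(j' < n) `|A i' j'|.
Proof.
rewrite (bigD1 i) //= (bigD1 j) //= -addrA lerDl.
by rewrite addr_ge0 ?sumr_ge0 // => *; rewrite sumr_ge0.
Qed.

Theorem theorem2 (R : realFieldType) (M N I : nat)
    (Y : 'M[R]_(M, I)) (X : 'M[R]_(N, I))
    (hY0 : forall m i, 0 <= Y m i) (hX0 : forall n i, 0 <= X n i)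
    (hYnz : Y != 0) (hXnz : X != 0) :
  forall k : 'I_I,
    exists sigma : R, 0 <= sigma /\
    exists (Dl : 'M[R]_(M, I)) (Nb : 'M[R]_(N, I)),
      (forall m i, `|Dl m i| <= sigma) /\
      (forall n i, `|Nb n i| <= sigma) /\
      (forall m i, 0 <= (Y + Dl) m i) /\
      (forall n i, 0 <= (X + Nb) n i) /\
      bcc_score_is (Y + Dl) (X + Nb) k 1.
Proof.
move=> k.
have /matrix0Pn[n0 _] := hXnz.
set bound := \sum_(n < N) \sum_(i < I) `|X n i|.
have bound_ge0 : 0 <= bound by rewrite sumr_ge0 // => *; rewrite sumr_ge0.
exists (1 + bound); split; first by rewrite addr_ge0.
exists 0, (const_mx 1 - X).
have X_to1 : X + (const_mx 1 - X) = const_mx 1 by rewrite addrC subrK.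
rewrite addr0 X_to1; split; [|split; [|split; [|split]]].
- by move=> m i; rewrite mxE normr0 addr_ge0.
- move=> n i; rewrite !mxE (le_trans (ler_normB _ _)) // normr1 lerD2l.
  exact: normr_le_sum_mx.
- exact: hY0.
- by move=> n i; rewrite mxE.
- by apply: (bcc_score1_const_row n0 1 ltr01) => i; rewrite mxE.
Qed.
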